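(* Let $\beta>0$, $\alpha\in(0,1)$ and $\rho>0$. Consider the planar system \[ \dot p=\rho\,(1-e^{p})-q,\qquad \dot q=-\beta\alpha\rho\,(1-e^{p}),\qquad (p,q)\in\mathbb{R}^2 . \] Then this system is globally stable, with all solutions tending to $(0,0)$ as $t\to\infty$.
   Context: This system arises from the single-agent resource–consumption model $\dot x=(1-x)x-xy$, $\dot y=\beta\alpha(x-\rho)$ via the change of variables $p=\ln x-\ln\rho$, $q=y-(1-\rho)$. *)

From Stdlib Require Import Reals.
From Coquelicot Require Import Coquelicot.
Open Scope R_scope.

Definition fp (rho p q : R) : R := rho * (1 - exp p) - q.
Definition fq (beta alpha rho p q : R) : R := - (beta * alpha * rho * (1 - exp p)).

Definition is_solution (beta alpha rho : R) (p q : R -> R) : Prop :=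
  (forall t, 0 < t ->
     is_derive p t (fp rho (p t) (q t)) /\
     is_derive q t (fq beta alpha rho (p t) (q t))) /\
  filterlim p (at_right 0) (locally (p 0)) /\
  filterlim q (at_right 0) (locally (q 0)).

Definition norm2 (x y : R) : R := sqrt (x ^ 2 + y ^ 2).

(* With k = beta alpha rho, the function V(p,q) = k (e^p - 1 - p) + q^2/2 is positive
   definite and decreases along solutions at rate k rho (e^p - 1)^2; this gives Lyapunov
   stability, and the bound V <= V(0) bounds p', so p is uniformly Lipschitz.  As V converges,
   |p| cannot stay large on the intervals of fixed length where the Lipschitz bound keeps it
   large, hence p -> 0.  Then q' -> 0 keeps q almost constant on unit intervals, on which
   p' ~ -q moves p by about -q; since p -> 0 this forces q -> 0. *)

From Stdlib Require Import Reals Lra Psatz Classical.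
From Coquelicot Require Import Coquelicot.
Open Scope R_scope.

Lemma exp_ge_sq_half (x : R) : -2 <= x -> (1 + x / 2) ^ 2 <= exp x.
Proof.
  intros Hx.
  assert (Hsplit : exp x = exp (x / 2) * exp (x / 2)).
  { rewrite <- exp_plus. f_equal. field. }
  pose proof (exp_ineq1_le (x / 2)). nra.
Qed.

Lemma two_mul_le_exp (x : R) : 2 * x <= exp x.
Proof.
  destruct (Rle_or_lt x 0) as [Hx | Hx].
  - pose proof (exp_pos x). lra.
  - pose proof (exp_ge_sq_half x ltac:(lra)). pose proof (pow2_ge_0 (1 - x / 2)). lra.
Qed.

Lemma exp_sub_one_sub_le (x : R) : x <= 1 / 2 -> exp x - 1 - x <= 2 * x ^ 2.
Proof.
  intros Hx.
  assert (Hinv : exp x * exp (- x) = 1).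
  { rewrite <- exp_plus, Rplus_opp_r. apply exp_0. }
  pose proof (exp_ineq1_le (- x)). pose proof (exp_ineq1_le x). pose proof (exp_pos x).
  assert (exp x * (1 - x) <= 1) by nra.
  nra.
Qed.

Lemma exp_sub_one_sq_ge (a x : R) :
  0 < a -> a <= Rabs x -> (1 - exp (- a)) ^ 2 <= (exp x - 1) ^ 2.
Proof.
  intros Ha Hx.
  assert (Hinv : exp a * exp (- a) = 1).
  { rewrite <- exp_plus, Rplus_opp_r. apply exp_0. }
  assert (exp (- a) < 1) by (rewrite <- exp_0; apply exp_increasing; lra).
  pose proof (exp_pos a). pose proof (exp_pos (- a)). pose proof (exp_pos x).
  assert (1 - exp (- a) <= exp a - 1) by nra.
  destruct (Rle_or_lt 0 x) as [Hpos | Hneg].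
  - rewrite Rabs_right in Hx by lra.
    assert (exp a <= exp x) by (apply Rnot_lt_le; intros Hlt; apply exp_lt_inv in Hlt; lra).
    nra.
  - rewrite Rabs_left in Hx by lra.
    assert (exp x <= exp (- a)) by (apply Rnot_lt_le; intros Hlt; apply exp_lt_inv in Hlt; lra).
    nra.
Qed.

Lemma Rabs_le_1_plus_sq (x : R) : Rabs x <= 1 + x ^ 2.
Proof. unfold Rabs; destruct (Rcase_abs x); nra. Qed.

Lemma norm2_lt_iff (x y d : R) : 0 < d -> norm2 x y < d <-> x ^ 2 + y ^ 2 < d ^ 2.
Proof.
  intros Hd. unfold norm2.
  assert (Hnn : 0 <= x ^ 2 + y ^ 2) by nra.
  rewrite <- (sqrt_pow2 d) at 1 by lra.
  split.
  - apply sqrt_lt_0_alt.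
  - intros H. apply sqrt_lt_1_alt. lra.
Qed.

Lemma mvt_closed (f df : R -> R) (s t : R) :
  s <= t -> (forall x, s <= x <= t -> is_derive f x (df x)) ->
  exists c, s <= c <= t /\ f t - f s = df c * (t - s).
Proof.
  intros Hst Hd.
  destruct (MVT_gen f s t df) as [c [Hc Heq]];
    rewrite ?Rmin_left, ?Rmax_right in * by lra.
  - intros x Hx. apply Hd. lra.
  - intros x Hx. apply continuity_pt_filterlim, (ex_derive_continuous f x).
    exists (df x). apply Hd. lra.
  - exists c. split; assumption.
Qed.

Lemma increment_near_linear (f df : R -> R) (c B s t : R) :
  s <= t -> (forall x, s <= x <= t -> is_derive f x (df x)) ->
  (forall x, s <= x <= t -> Rabs (df x - c) <= B) ->
  Rabs (f t - f s - c * (t - s)) <= B * (t - s).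
Proof.
  intros Hst Hd HB.
  destruct (mvt_closed f df s t Hst Hd) as [x [Hx ->]].
  replace (df x * (t - s) - c * (t - s)) with ((df x - c) * (t - s)) by ring.
  rewrite Rabs_mult, (Rabs_right (t - s)) by lra.
  apply Rmult_le_compat_r; [lra | exact (HB x Hx)].
Qed.

Lemma le_of_right_cont (h : R -> R) (a b c : R) :
  a < b -> filterlim h (at_right a) (locally (h a)) ->
  (forall x, a < x <= b -> c <= h x) -> c <= h a.
Proof.
  intros Hab Hlim Hc.
  destruct (Rle_or_lt c (h a)) as [Hle | Hlt]; [exact Hle | exfalso].
  destruct (proj1 (filterlim_locally h (h a)) Hlim (mkposreal _ (proj2 (Rlt_0_minus _ _) Hlt)))
    as [[d Hd] Hnear].
  set (x := a + Rmin d (b - a) / 2).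
  assert (Hmin : 0 < Rmin d (b - a) <= b - a) by (split; [apply Rmin_pos | apply Rmin_r]; lra).
  assert (Hx : a < x <= b) by (unfold x; lra).
  assert (Hball : ball a d x).
  { change (Rabs (x - a) < d). rewrite Rabs_right by lra.
    pose proof (Rmin_l d (b - a)). unfold x. lra. }
  specialize (Hnear x Hball (proj1 Hx)).
  change (Rabs (h x - h a) < c - h a) in Hnear.
  pose proof (Rle_abs (h x - h a)). pose proof (Hc x Hx). lra.
Qed.

Lemma nonincr_bounded_settles (V : R -> R) (m : R) :
  (forall s t, 0 <= s <= t -> V t <= V s) -> (forall t, 0 <= t -> m <= V t) ->
  forall eps, 0 < eps -> exists T, 0 <= T /\ forall t, T <= t -> V T - V t < eps.
Proof.
  intros Hmono Hbound eps Heps.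
  set (E := fun y => exists t, 0 <= t /\ y = - V t).
  destruct (completeness E) as [L [Hub Hleast]].
  - exists (- m). intros y [t [Ht ->]]. specialize (Hbound t Ht). lra.
  - exists (- V 0), 0. split; [lra | reflexivity].
  - destruct (classic (exists T, 0 <= T /\ L - eps < - V T)) as [[T [HT Hgt]] | Hnone].
    + exists T. split; [exact HT |]. intros t Ht.
      assert (- V t <= L) by (apply Hub; exists t; split; [lra | reflexivity]).
      lra.
    + exfalso. assert (L <= L - eps); [| lra].
      apply Hleast. intros y [t [Ht ->]].
      apply Rnot_lt_le. intros Hlt. apply Hnone. exists t. split; assumption.
Qed.

Definition lyapunov (k x y : R) : R := k * (exp x - 1 - x) + y ^ 2 / 2.

Lemma is_derive_lyapunov (k : R) (p q : R -> R) (t dp dq : R) :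
  is_derive p t dp -> is_derive q t dq ->
  is_derive (fun s => lyapunov k (p s) (q s)) t (k * (exp (p t) - 1) * dp + q t * dq).
Proof.
  intros Hp Hq.
  pose proof (is_derive_comp exp p t _ _ (is_derive_exp (p t)) Hp) as He.
  pose proof (is_derive_minus _ _ _ _ _ (is_derive_minus _ _ _ _ _ He (is_derive_const 1 t)) Hp)
    as HE.
  pose proof (is_derive_scal _ t k _ HE) as HkE.
  pose proof (is_derive_scal _ t (/ 2) _ (is_derive_pow q 2 t dq Hq)) as Hq2.
  pose proof (is_derive_plus _ _ _ _ _ HkE Hq2) as Hsum.
  match type of Hsum with is_derive _ _ ?l =>
    replace (k * (exp (p t) - 1) * dp + q t * dq) with l end.
  - refine (is_derive_ext _ _ t _ _ Hsum). intros s.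
    unfold lyapunov, plus, minus, opp; simpl. unfold plus; simpl. unfold Rminus, Rdiv. ring.
  - unfold plus, minus, scal, opp, zero; simpl. unfold plus, mult; simpl. field.
Qed.

Lemma filterlim_lyapunov_at_right (k a : R) (p q : R -> R) :
  filterlim p (at_right a) (locally (p a)) -> filterlim q (at_right a) (locally (q a)) ->
  filterlim (fun t => lyapunov k (p t) (q t)) (at_right a) (locally (lyapunov k (p a) (q a))).
Proof.
  intros Hp Hq.
  assert (HE : filterlim (fun t => k * (exp (p t) - 1 - p t)) (at_right a)
                 (locally (k * (exp (p a) - 1 - p a)))).
  { apply (filterlim_comp _ _ _ p (fun x => k * (exp x - 1 - x)) _ _ _ Hp).
    apply (ex_derive_continuous (fun x => k * (exp x - 1 - x))). auto_derive. auto. }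
  assert (HQ : filterlim (fun t => q t ^ 2 / 2) (at_right a) (locally (q a ^ 2 / 2))).
  { apply (filterlim_comp _ _ _ q (fun y => y ^ 2 / 2) _ _ _ Hq).
    apply (ex_derive_continuous (fun y => y ^ 2 / 2)). auto_derive. auto. }
  exact (filterlim_comp_2 _ _ plus HE HQ (filterlim_plus _ _)).
Qed.

Lemma lyapunov_nonneg (k x y : R) : 0 <= k -> 0 <= lyapunov k x y.
Proof.
  intros Hk. unfold lyapunov. pose proof (exp_ineq1_le x). pose proof (pow2_ge_0 y).
  assert (0 <= k * (exp x - 1 - x)) by (apply Rmult_le_pos; lra).
  lra.
Qed.

Lemma lyapunov_le_sq_norm (k x y : R) :
  0 <= k -> x <= 1 / 2 -> lyapunov k x y <= (2 * k + 1) * (x ^ 2 + y ^ 2).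
Proof.
  intros Hk Hx. unfold lyapunov.
  assert (k * (exp x - 1 - x) <= k * (2 * x ^ 2))
    by (apply Rmult_le_compat_l; [lra | exact (exp_sub_one_sub_le x Hx)]).
  pose proof (pow2_ge_0 x). pose proof (pow2_ge_0 y). nra.
Qed.

Lemma sq_norm_le_lyapunov (k x y : R) :
  0 < k -> lyapunov k x y < k -> Rmin (k / 4) (1 / 2) * (x ^ 2 + y ^ 2) <= lyapunov k x y.
Proof.
  intros Hk Hlt. unfold lyapunov in *.
  pose proof (pow2_ge_0 x). pose proof (pow2_ge_0 y).
  destruct (Rle_or_lt (-2) x) as [Hx | Hx].
  - pose proof (exp_ge_sq_half x Hx).
    assert (k * (x ^ 2 / 4) <= k * (exp x - 1 - x)) by (apply Rmult_le_compat_l; nra).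
    pose proof (Rmin_l (k / 4) (1 / 2)). pose proof (Rmin_r (k / 4) (1 / 2)). nra.
  - exfalso. pose proof (exp_pos x).
    assert (k * 1 <= k * (exp x - 1 - x)) by (apply Rmult_le_compat_l; lra).
    lra.
Qed.

Lemma fp_le_of_lyapunov (k rho x y C : R) :
  0 < k -> 0 < rho -> lyapunov k x y <= C ->
  Rabs (fp rho x y) <= rho * (3 + 2 * (C / k)) + (1 + 2 * C).
Proof.
  intros Hk Hrho HC.
  set (D := C / k).
  assert (HCD : C = k * D) by (unfold D; field; lra).
  unfold lyapunov in HC. pose proof (exp_ineq1_le x). pose proof (pow2_ge_0 y).
  assert (0 <= k * (exp x - 1 - x)) by (apply Rmult_le_pos; lra).
  assert (HE : exp x - 1 - x <= D).
  { apply (Rmult_le_reg_l k); [exact Hk |]. rewrite <- HCD. lra. }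
  assert (Hexp : rho * exp x <= rho * (2 * D + 2)).
  { apply Rmult_le_compat_l; [lra |]. pose proof (two_mul_le_exp x). lra. }
  assert (Hy : Rabs y <= 1 + 2 * C) by (pose proof (Rabs_le_1_plus_sq y); lra).
  pose proof (Rle_abs y). pose proof (Rabs_maj2 y).
  assert (0 <= rho * exp x) by (apply Rmult_le_pos; [lra | apply Rlt_le, exp_pos]).
  assert (0 <= rho * D) by (apply Rmult_le_pos; [lra | rewrite HCD in *; nra]).
  unfold fp. apply Rabs_le. split; nra.
Qed.

Lemma is_lim_one_sub_exp (c : R) (u : R -> R) :
  is_lim u p_infty 0 -> is_lim (fun t => c * (1 - exp (u t))) p_infty 0.
Proof.
  intros Hu.
  assert (Hcont : continuous (fun x => c * (1 - exp x)) 0).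
  { apply (ex_derive_continuous (fun x => c * (1 - exp x))). auto_derive. auto. }
  pose proof (is_lim_comp_continuous u _ p_infty 0 Hu Hcont) as Hlim.
  cbv beta in Hlim. rewrite exp_0, Rminus_diag, Rmult_0_r in Hlim. exact Hlim.
Qed.

Lemma is_lim_zero_of_slow_drift (p q dp dq : R -> R) :
  (forall t, 0 < t -> is_derive p t (dp t)) -> (forall t, 0 < t -> is_derive q t (dq t)) ->
  is_lim p p_infty 0 -> is_lim (fun t => dp t + q t) p_infty 0 -> is_lim dq p_infty 0 ->
  is_lim q p_infty 0.
Proof.
  intros Hdp Hdq Hp Hdrift Hslow.
  apply is_lim_spec. intros [e He]. simpl.
  assert (He8 : 0 < e / 8) by lra. set (e8 := mkposreal _ He8).
  destruct (proj2 (is_lim_spec _ _ _) Hp e8) as [T1 HT1].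
  destruct (proj2 (is_lim_spec _ _ _) Hdrift e8) as [T2 HT2].
  destruct (proj2 (is_lim_spec _ _ _) Hslow e8) as [T3 HT3].
  simpl in HT1, HT2, HT3.
  exists (Rmax 0 (Rmax T1 (Rmax T2 T3))). intros t Ht.
  repeat rewrite Rmax_Rlt in Ht.
  assert (Hq_near : forall x, t <= x <= t + 1 -> Rabs (q x - q t) <= e / 8).
  { intros x Hx.
    assert (Hinc : Rabs (q x - q t - 0 * (x - t)) <= e / 8 * (x - t)).
    { apply (increment_near_linear q dq); [lra | |].
      - intros y Hy. apply Hdq. lra.
      - intros y Hy. left. apply HT3. lra. }
    rewrite Rmult_0_l, Rminus_0_r in Hinc. nra. }
  assert (Hstep : Rabs (p (t + 1) - p t - (- q t) * (t + 1 - t)) <= e / 4 * (t + 1 - t)).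
  { apply (increment_near_linear p dp); [lra | |].
    - intros y Hy. apply Hdp. lra.
    - intros y Hy.
      replace (dp y - - q t) with ((dp y + q y - 0) - (q y - q t)) by ring.
      pose proof (Rabs_triang (dp y + q y - 0) (- (q y - q t))) as Htri.
      rewrite Rabs_Ropp in Htri.
      pose proof (HT2 y ltac:(lra)). pose proof (Hq_near y Hy). unfold Rminus at 1. lra. }
  pose proof (HT1 t ltac:(lra)) as Hpt. pose proof (HT1 (t + 1) ltac:(lra)) as Hpt1.
  rewrite Rminus_0_r in Hpt, Hpt1 |- *.
  set (w := p (t + 1) - p t - - q t * (t + 1 - t)) in Hstep.
  assert (Hw : q t = w - p (t + 1) + p t) by (unfold w; ring).
  pose proof (Rle_abs w). pose proof (Rabs_maj2 w).
  pose proof (Rle_abs (p t)). pose proof (Rabs_maj2 (p t)).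
  pose proof (Rle_abs (p (t + 1))). pose proof (Rabs_maj2 (p (t + 1))).
  apply Rabs_def1; lra.
Qed.

Section Trajectory.

Variables (beta alpha rho : R) (p q : R -> R).
Hypothesis Hk : 0 < beta * alpha * rho.
Hypothesis Hrho : 0 < rho.
Hypothesis Hsol : is_solution beta alpha rho p q.

Local Notation k := (beta * alpha * rho).
Local Notation V t := (lyapunov k (p t) (q t)).

Lemma lyapunov_deriv (t : R) :
  0 < t -> is_derive (fun s => V s) t (- (k * rho) * (exp (p t) - 1) ^ 2).
Proof.
  intros Ht. destruct (proj1 Hsol t Ht) as [Hp Hq].
  replace (- (k * rho) * (exp (p t) - 1) ^ 2) with
    (k * (exp (p t) - 1) * fp rho (p t) (q t) + q t * fq beta alpha rho (p t) (q t))
    by (unfold fp, fq; ring).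
  exact (is_derive_lyapunov k p q t _ _ Hp Hq).
Qed.

Lemma lyapunov_decay (s t g : R) :
  0 < s <= t -> (forall x, s <= x <= t -> g <= (exp (p x) - 1) ^ 2) ->
  V t <= V s - k * rho * g * (t - s).
Proof.
  intros Hst Hg.
  destruct (mvt_closed (fun s => V s) _ s t (proj2 Hst) (fun x Hx => lyapunov_deriv x ltac:(lra)))
    as [c [Hc Heq]].
  assert (0 <= k * rho * (t - s) * ((exp (p c) - 1) ^ 2 - g)).
  { pose proof (Hg c Hc).
    apply Rmult_le_pos; [apply Rmult_le_pos; [apply Rmult_le_pos |] |]; lra. }
  nra.
Qed.

Lemma lyapunov_nonincr (s t : R) : 0 <= s <= t -> V t <= V s.
Proof.
  intros Hst.
  assert (Hpos : forall s', 0 < s' <= t -> V t <= V s').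
  { intros s' Hs'. pose proof (lyapunov_decay s' t 0 Hs' (fun x _ => pow2_ge_0 _)). lra. }
  destruct (Rle_lt_or_eq_dec 0 s (proj1 Hst)) as [Hs | <-]; [apply Hpos; lra |].
  destruct (Rle_lt_or_eq_dec 0 t (proj2 Hst)) as [Ht | <-]; [| lra].
  destruct Hsol as [_ [Hp0 Hq0]].
  exact (le_of_right_cont (fun s => V s) 0 t (V t) Ht
           (filterlim_lyapunov_at_right k 0 p q Hp0 Hq0) Hpos).
Qed.

Lemma solution_p_lipschitz :
  exists B, 0 < B /\ forall s t, 0 < s <= t -> Rabs (p t - p s) <= B * (t - s).
Proof.
  set (C := V 0).
  assert (HC : 0 <= C) by (apply lyapunov_nonneg; lra).
  exists (rho * (3 + 2 * (C / k)) + (1 + 2 * C)). split.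
  - assert (0 <= C / k) by (apply Rdiv_le_0_compat; lra). nra.
  - intros s t Hst.
    assert (Hinc := increment_near_linear p (fun x => fp rho (p x) (q x)) 0
                      (rho * (3 + 2 * (C / k)) + (1 + 2 * C)) s t (proj2 Hst)).
    rewrite Rmult_0_l, Rminus_0_r in Hinc. apply Hinc.
    + intros x Hx. exact (proj1 (proj1 Hsol x ltac:(lra))).
    + intros x Hx. rewrite Rminus_0_r. apply fp_le_of_lyapunov; [lra | lra |].
      apply lyapunov_nonincr. lra.
Qed.

Lemma solution_p_lim : is_lim p p_infty 0.
Proof.
  destruct solution_p_lipschitz as [B [HB Hlip]].
  assert (Hsettle := nonincr_bounded_settles (fun t => V t) 0 lyapunov_nonincr
                       (fun t _ => lyapunov_nonneg k (p t) (q t) (Rlt_le _ _ Hk))).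
  apply is_lim_spec. intros [eta Heta]. simpl.
  set (a := eta / 2). set (h := a / B). set (g := (1 - exp (- a)) ^ 2).
  assert (Ha : 0 < a) by (unfold a; lra).
  assert (Hh : 0 < h) by (unfold h; apply Rdiv_lt_0_compat; lra).
  assert (HBh : B * h = a) by (unfold h; field; lra).
  assert (Hg : 0 < g).
  { unfold g. assert (exp (- a) < 1) by (rewrite <- exp_0; apply exp_increasing; lra).
    apply pow_lt. lra. }
  assert (Hkrho : 0 < k * rho) by (apply Rmult_lt_0_compat; lra).
  destruct (Hsettle (k * rho * g * h)) as [T [HT0 HT]].
  { apply Rmult_lt_0_compat; [apply Rmult_lt_0_compat |]; lra. }
  exists T. intros t Ht. rewrite Rminus_0_r.
  destruct (Rlt_or_le (Rabs (p t)) eta) as [Hnear | Hfar]; [exact Hnear | exfalso].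
  assert (Hdecay : V (t + h) <= V t - k * rho * g * (t + h - t)).
  { apply lyapunov_decay; [lra |]. intros x Hx. apply exp_sub_one_sq_ge; [exact Ha |].
    pose proof (Hlip t x ltac:(lra)).
    pose proof (Rabs_triang_inv (p t) (p t - p x)) as Htri.
    replace (p t - (p t - p x)) with (p x) in Htri by ring.
    rewrite (Rabs_minus_sym (p t) (p x)) in Htri.
    assert (B * (x - t) <= B * h) by (apply Rmult_le_compat_l; lra).
    unfold a in *. lra. }
  pose proof (HT (t + h) ltac:(lra)). pose proof (lyapunov_nonincr T t ltac:(lra)).
  replace (t + h - t) with h in Hdecay by ring. lra.
Qed.

Lemma solution_q_lim : is_lim q p_infty 0.
Proof.
  apply (is_lim_zero_of_slow_drift p q (fun t => fp rho (p t) (q t))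
           (fun t => fq beta alpha rho (p t) (q t))).
  - intros t Ht. exact (proj1 (proj1 Hsol t Ht)).
  - intros t Ht. exact (proj2 (proj1 Hsol t Ht)).
  - exact solution_p_lim.
  - apply (is_lim_ext (fun t => rho * (1 - exp (p t)))).
    + intros t. unfold fp. ring.
    + exact (is_lim_one_sub_exp rho p solution_p_lim).
  - apply (is_lim_ext (fun t => - k * (1 - exp (p t)))).
    + intros t. unfold fq. ring.
    + exact (is_lim_one_sub_exp (- k) p solution_p_lim).
Qed.

End Trajectory.

Lemma lyapunov_stable (beta alpha rho : R) :
  0 < beta * alpha * rho -> 0 < rho ->
  forall eps, 0 < eps -> exists delta, 0 < delta /\
    forall p q : R -> R, is_solution beta alpha rho p q ->
      norm2 (p 0) (q 0) < delta -> forall t, 0 <= t -> norm2 (p t) (q t) < eps.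
Proof.
  intros Hk Hrho eps Heps.
  set (k := beta * alpha * rho) in *.
  set (mu := Rmin (k / 4) (1 / 2)).
  set (c := Rmin k (mu * eps ^ 2)).
  set (delta := Rmin (1 / 2) (c / (2 * k + 1))).
  assert (Hmu : 0 < mu) by (apply Rmin_pos; lra).
  assert (Hc : 0 < c) by (apply Rmin_pos; [lra | apply Rmult_lt_0_compat, pow_lt; lra]).
  assert (Hdelta : 0 < delta) by (apply Rmin_pos; [lra | apply Rdiv_lt_0_compat; lra]).
  assert (Hdelta_half : delta <= 1 / 2) by apply Rmin_l.
  assert (Hdelta_sq : (2 * k + 1) * delta ^ 2 <= c).
  { assert (delta <= c / (2 * k + 1)) by apply Rmin_r.
    assert ((2 * k + 1) * (c / (2 * k + 1)) = c) by (field; lra).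
    assert ((2 * k + 1) * delta <= c) by nra.
    nra. }
  exists delta. split; [exact Hdelta |].
  intros p q Hsol H0 t Ht.
  apply norm2_lt_iff in H0; [| exact Hdelta]. apply norm2_lt_iff; [exact Heps |].
  pose proof (pow2_ge_0 (p 0)). pose proof (pow2_ge_0 (q 0)).
  assert (Hp0 : p 0 <= 1 / 2) by nra.
  assert (HV0 : lyapunov k (p 0) (q 0) < c).
  { pose proof (lyapunov_le_sq_norm k (p 0) (q 0) ltac:(lra) Hp0).
    assert ((2 * k + 1) * (p 0 ^ 2 + q 0 ^ 2) < (2 * k + 1) * delta ^ 2)
      by (apply Rmult_lt_compat_l; lra).
    lra. }
  pose proof (lyapunov_nonincr beta alpha rho p q Hk Hrho Hsol 0 t ltac:(lra)) as HVt.
  fold k in HVt.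
  assert (Hck : c <= k) by apply Rmin_l.
  assert (Hceps : c <= mu * eps ^ 2) by apply Rmin_r.
  pose proof (sq_norm_le_lyapunov k (p t) (q t) Hk ltac:(lra)) as Hlow. fold mu in Hlow.
  apply (Rmult_lt_reg_l mu); [exact Hmu |]. lra.
Qed.

Theorem theorem6p1 (beta alpha rho : R) :
  0 < beta -> 0 < alpha < 1 -> 0 < rho ->
  (forall eps, 0 < eps -> exists delta, 0 < delta /\
     forall p q : R -> R, is_solution beta alpha rho p q ->
       norm2 (p 0) (q 0) < delta ->
       forall t, 0 <= t -> norm2 (p t) (q t) < eps) /\
  (forall p q : R -> R, is_solution beta alpha rho p q ->
     is_lim p p_infty 0 /\ is_lim q p_infty 0).
Proof.
  intros Hbeta Halpha Hrho.
  assert (Hk : 0 < beta * alpha * rho)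
    by (apply Rmult_lt_0_compat; [apply Rmult_lt_0_compat |]; lra).
  split.
  - exact (lyapunov_stable beta alpha rho Hk Hrho).
  - intros p q Hsol. split.
    + exact (solution_p_lim beta alpha rho p q Hk Hrho Hsol).
    + exact (solution_q_lim beta alpha rho p q Hk Hrho Hsol).
Qed.
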